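(* Consider MALIQUOT. Then, for all $n$, $\mathcal{SG}(n) = \Omega(n)$.
   Context: MALIQUOT is the impartial normal-play game whose positions are the positive integers, where from $n$ a player moves to a proper divisor of $n$, i.e. $\mathrm{opt}(n)=\{d: d\mid n,\ 0<d<n\}$; the player unable to move loses. $\mathcal{SG}$ denotes the Sprague-Grundy (nim-)value, $\mathcal{SG}(n)=\mathrm{mex}\{\mathcal{SG}(x):x\in\mathrm{opt}(n)\}$. $\Omega(n)$ is the number of prime factors of $n$ counted with multiplicity. *)

From mathcomp Require Import all_boot.
Set Implicit Arguments. Unset Strict Implicit. Unset Printing Implicit Defensive.

(* Proper divisors of n : the options of n in MALIQUOT, {d : d | n, 0 < d < n}. *)
Definition proper_divisors (n : nat) : seq nat :=
  [seq d <- divisors n | d < n].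

Definition mex (s : seq nat) : nat :=
  find (fun k => k \notin s) (iota 0 (size s).+1).

(* Sprague-Grundy value with fuel; proper divisors are < n so fuel n suffices. *)
Fixpoint sg_fuel (fuel n : nat) : nat :=
  match fuel with
  | 0 => 0
  | fuel'.+1 => mex [seq sg_fuel fuel' d | d <- proper_divisors n]
  end.

Definition SG (n : nat) : nat := sg_fuel n n.

Definition bigOmega (n : nat) : nat := \sum_(p <- primes n) logn p n.

(* A move n -> d splits n = d * (n %/ d) with n %/ d > 1, so Omega strictly
   decreases along every move; conversely, stripping the prime factors of n one
   at a time yields divisors of n realising every value below Omega(n).  Hence,
   by induction on n, the option values of n are exactly {0, ..., Omega(n) - 1}
   and their mex is Omega(n). *)

From mathcomp Require Import all_boot.

Set Implicit Arguments.
Unset Strict Implicit.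
Unset Printing Implicit Defensive.

Lemma bigOmega_supp (s : seq nat) n :
  uniq s -> {subset primes n <= s} -> bigOmega n = \sum_(p <- s) logn p n.
Proof.
move=> s_uniq primes_s.
rewrite -(big_rmcond_in addn (P := fun p => p \in primes n)); last first.
  by move=> p _; rewrite -logn_gt0 lt0n negbK => /eqP.
rewrite -big_filter /bigOmega; apply/perm_big/uniq_perm.
- exact: primes_uniq.
- by rewrite filter_uniq.
- by move=> p; rewrite mem_filter andb_idr //; apply: primes_s.
Qed.

Lemma bigOmega0 : bigOmega 0 = 0.
Proof. by rewrite /bigOmega big_nil. Qed.

Lemma bigOmega1 : bigOmega 1 = 0.
Proof. by rewrite /bigOmega big_nil. Qed.

Lemma bigOmega_prime p : prime p -> bigOmega p = 1.
Proof. by move=> p_pr; rewrite /bigOmega primes_prime // big_seq1 logn_prime ?eqxx. Qed.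

Lemma bigOmegaM m n : 0 < m -> 0 < n -> bigOmega (m * n) = bigOmega m + bigOmega n.
Proof.
move=> m_gt0 n_gt0.
rewrite (@bigOmega_supp (primes (m * n)) m) ?(@bigOmega_supp (primes (m * n)) n)
  ?primes_uniq //.
- by rewrite -big_split; apply: eq_bigr => p _; rewrite lognM.
- by move=> p p_n; rewrite primesM // p_n orbT.
- by move=> p p_m; rewrite primesM // p_m.
Qed.

Lemma bigOmega_pdiv n : 1 < n -> bigOmega n = (bigOmega (n %/ pdiv n)).+1.
Proof.
move=> n_gt1; have pdiv_pr := pdiv_prime n_gt1.
have n_gt0 : 0 < n by apply: ltnW.
have q_gt0 : 0 < n %/ pdiv n by rewrite divn_gt0 ?pdiv_gt0 ?pdiv_leq.
by rewrite -{1}(divnK (pdiv_dvd n)) mulnC bigOmegaM // (bigOmega_prime pdiv_pr).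
Qed.

Lemma bigOmega_gt0 n : 1 < n -> 0 < bigOmega n.
Proof. by move/bigOmega_pdiv->. Qed.

Lemma bigOmega_ltn_dvd d n : 0 < n -> d %| n -> d < n -> bigOmega d < bigOmega n.
Proof.
move=> n_gt0 d_dvd_n d_lt_n; have d_gt0 := dvdn_gt0 n_gt0 d_dvd_n.
have q_gt1 : 1 < n %/ d by rewrite ltn_divRL // mul1n.
rewrite -(divnK d_dvd_n) mulnC bigOmegaM ?(ltnW q_gt1) //.
by rewrite -{1}[bigOmega d]addn0 ltn_add2l bigOmega_gt0.
Qed.

Lemma dvdn_bigOmega_leq n j :
  0 < n -> j <= bigOmega n -> exists2 d, d %| n & bigOmega d = j.
Proof.
elim/ltn_ind: n => n IHn n_gt0; rewrite leq_eqVlt => /predU1P [->|j_lt].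
  by exists n.
have n_gt1 : 1 < n.
  by rewrite ltn_neqAle n_gt0 andbT; apply: contraTneq j_lt => <-; rewrite bigOmega1.
set m := n %/ pdiv n; have pdiv_gt1 := prime_gt1 (pdiv_prime n_gt1).
have m_lt_n : m < n by rewrite ltn_Pdiv.
have m_gt0 : 0 < m by rewrite divn_gt0 ?pdiv_gt0 ?pdiv_leq.
have [|d d_dvd_m <-] := IHn m m_lt_n m_gt0; first by rewrite -ltnS -bigOmega_pdiv.
by exists d; rewrite // (dvdn_trans d_dvd_m) ?dvdn_div ?pdiv_dvd.
Qed.

Lemma mexE (s : seq nat) k :
  (forall j, j < k -> j \in s) -> k \notin s -> mex s = k.
Proof.
move=> below_in k_notin; have k_le_size : k <= size s.
  have := uniq_leq_size (iota_uniq 0 k) (s2 := s); rewrite size_iota; apply=> j.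
  by rewrite mem_iota; apply: below_in.
have has_notin : has (fun j => j \notin s) (iota 0 (size s).+1).
  by apply/hasP; exists k; rewrite ?mem_iota.
rewrite /mex; set i := find _ _; case: (ltngtP i k) => // [i_lt_k | k_lt_i].
- have := nth_find 0 has_notin; rewrite -/i nth_iota.
    by rewrite add0n below_in.
  exact: leq_trans i_lt_k (leqW k_le_size).
- by have := before_find 0 k_lt_i; rewrite nth_iota // add0n k_notin.
Qed.

Lemma mex_bigOmega_proper_divisors n :
  mex [seq bigOmega d | d <- proper_divisors n] = bigOmega n.
Proof.
have [->|n_gt0] := posnP n; first by rewrite bigOmega0.
have mem_proper d : (d \in proper_divisors n) = (d %| n) && (d < n).
  by rewrite mem_filter andbC -dvdn_divisors.
apply: mexE => [j j_lt|].
- have [d d_dvd_n d_j] := dvdn_bigOmega_leq n_gt0 (ltnW j_lt).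
  apply/mapP; exists d => //; rewrite mem_proper d_dvd_n ltn_neqAle dvdn_leq // andbT.
  by apply: contraTneq j_lt => d_eq_n; rewrite -d_j d_eq_n ltnn.
- apply/mapP => -[d]; rewrite mem_proper => /andP [d_dvd_n d_lt_n] Omega_eq.
  by move: (bigOmega_ltn_dvd n_gt0 d_dvd_n d_lt_n); rewrite Omega_eq ltnn.
Qed.

Lemma sg_fuelE fuel n : n <= fuel -> sg_fuel fuel n = bigOmega n.
Proof.
elim: fuel n => [|fuel IH] n n_le.
  by move: n_le; rewrite leqn0 => /eqP ->; rewrite bigOmega0.
rewrite /= -mex_bigOmega_proper_divisors; congr mex; apply/eq_in_map => d.
by rewrite mem_filter => /andP [d_lt_n _]; apply: IH; rewrite -ltnS (leq_trans d_lt_n).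
Qed.

Theorem mainTheorem1 (n : nat) : 0 < n -> SG n = bigOmega n.
Proof. by move=> _; apply: sg_fuelE. Qed.
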